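(* Every almost periodic sequence has the universal joint repetition property. That is, if $a:\mathbb{Z}\to\mathbb{C}$ is almost periodic, then for every metric space $\tilde\Omega$ and every sequence $\{\tilde\omega_n\}_{n\ge0}$ in $\tilde\Omega$ with the repetition property, the sequences $\{a(n)\}_{n\ge0}$ (in $\mathbb{C}$) and $\{\tilde\omega_n\}_{n\ge0}$ have the joint repetition property.
   Context: $a:\mathbb{Z}\to\mathbb{C}$ is almost periodic if its set of translates $\{a(\cdot+m):m\in\mathbb{Z}\}$ is relatively compact in $\ell^\infty(\mathbb{Z})$. $\mathbb{Z}_+=\{1,2,\ldots\}$. A sequence $\{\omega_n\}_{n\ge0}$ in a metric space $\Omega$ has the repetition property if for every $\varepsilon>0$ and $r \in \mathbb{Z}_+$ there exists $q \in \mathbb{Z}_+$ such that $\mathrm{dist}(\omega_n,\omega_{n+q}) < \varepsilon$ for $n = 0,1,\ldots, rq$. A family of sequences (possibly in different metric spaces) has the joint repetition property if each of them has the repetition property and, for each finite subfamily and each $\varepsilon>0$, $r\in\mathbb{Z}_+$, a single $q\in\mathbb{Z}_+$ can be chosen that works simultaneously for all sequences in the subfamily. A sequence $\{\omega_n\}$ in a metric space has the universal joint repetition property if it has the joint repetition property with every sequence (in any metric space) that has the repetition property. $\mathbb{C}$ carries its usual metric. *)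

From Stdlib Require Import Reals ZArith Lra Psatz.
Open Scope R_scope.

Record MetricSpace : Type := {
  mcarrier :> Type;
  mdist : mcarrier -> mcarrier -> R;
  mdist_nonneg : forall x y, 0 <= mdist x y;
  mdist_eq0 : forall x y, mdist x y = 0 <-> x = y;
  mdist_sym : forall x y, mdist x y = mdist y x;
  mdist_tri : forall x y z, mdist x z <= mdist x y + mdist y z
}.

Definition Cplx : Type := (R * R)%type.
Definition Cdist (z w : Cplx) : R :=
  sqrt ((fst z - fst w) ^ 2 + (snd z - snd w) ^ 2).

Definition Zbounded (f : Z -> Cplx) : Prop :=
  exists M : R, forall m : Z, Cdist (f m) (0, 0) <= M.

Definition linf_converges (f : nat -> Z -> Cplx) (g : Z -> Cplx) : Prop :=
  forall eps, 0 < eps -> exists K : nat, forall k, (K <= k)%nat ->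
    exists e', e' < eps /\ forall m : Z, Cdist (f k m) (g m) <= e'.

(** Almost periodic: a is in l^infty(Z) and the set of its translates is
    relatively compact in l^infty(Z), i.e. (metric space) every sequence of
    translates has a subsequence converging in l^infty(Z). *)
Definition almost_periodic (a : Z -> Cplx) : Prop :=
  Zbounded a /\
  forall ms : nat -> Z,
    exists phi : nat -> nat, (forall k, (phi k < phi (S k))%nat) /\
    exists g : Z -> Cplx, Zbounded g /\
      linf_converges (fun k m => a (m + ms (phi k))%Z) g.

Definition repetition_property {X : MetricSpace} (w : nat -> X) : Prop :=
  forall eps, 0 < eps -> forall r : nat, (1 <= r)%nat ->
    exists q : nat, (1 <= q)%nat /\
      forall n : nat, (n <= r * q)%nat -> mdist X (w n) (w (n + q)%nat) < eps.

(** Joint repetition property of a family of two sequences (the only finite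
    subfamilies are the singletons, handled by the individual repetition
    properties, and the whole pair). *)
Definition joint_repetition_property2 {X Y : MetricSpace}
  (w1 : nat -> X) (w2 : nat -> Y) : Prop :=
  repetition_property w1 /\ repetition_property w2 /\
  forall eps, 0 < eps -> forall r : nat, (1 <= r)%nat ->
    exists q : nat, (1 <= q)%nat /\
      forall n : nat, (n <= r * q)%nat ->
        mdist X (w1 n) (w1 (n + q)%nat) < eps /\
        mdist Y (w2 n) (w2 (n + q)%nat) < eps.

Definition universal_joint_repetition_property {X : MetricSpace}
  (w : nat -> X) : Prop :=
  forall (Y : MetricSpace) (v : nat -> Y),
    repetition_property v -> joint_repetition_property2 w v.

Lemma euclid_tri (a b c d : R) : sqrt ((a+c)^2 + (b+d)^2) <= sqrt (a^2+b^2) + sqrt (c^2+d^2).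
Proof.
  assert (H1 := sqrt_pos (a^2+b^2)). assert (H2 := sqrt_pos (c^2+d^2)).
  assert (E1 : sqrt (a^2+b^2) * sqrt (a^2+b^2) = a^2+b^2) by (apply sqrt_sqrt; nra).
  assert (E2 : sqrt (c^2+d^2) * sqrt (c^2+d^2) = c^2+d^2) by (apply sqrt_sqrt; nra).
  rewrite <- (sqrt_square (sqrt (a^2+b^2) + sqrt (c^2+d^2))) by lra.
  apply sqrt_le_1_alt.
  assert (CS : a*c + b*d <= sqrt (a^2+b^2) * sqrt (c^2+d^2)).
  { destruct (Rle_dec (a*c+b*d) 0). nra.
    assert (P := Rmult_le_pos _ _ H1 H2).
    apply Rsqr_incr_0_var; unfold Rsqr; try lra.
    replace (sqrt (a ^ 2 + b ^ 2) * sqrt (c ^ 2 + d ^ 2) * (sqrt (a ^ 2 + b ^ 2) * sqrt (c ^ 2 + d ^ 2))) with ((a^2+b^2)*(c^2+d^2)) by (rewrite <- E1 at 1; rewrite <- E2 at 1; ring).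
    assert (0 <= (a*d-b*c)^2) by (apply pow2_ge_0). nra. }
  nra.
Qed.

Lemma Cdist_nonneg : forall x y, 0 <= Cdist x y.
Proof. intros; unfold Cdist; apply sqrt_pos. Qed.

Lemma Cdist_eq0 : forall x y, Cdist x y = 0 <-> x = y.
Proof.
  intros [a b] [c d]; unfold Cdist; simpl; split.
  - intro H. apply sqrt_eq_0 in H; [|assert (Ha := pow2_ge_0 (a - c)); assert (Hb := pow2_ge_0 (b - d)); lra].
    assert (Ha := pow2_ge_0 (a - c)). assert (Hb := pow2_ge_0 (b - d)).
    assert (Ha' : (a - c) ^ 2 = 0) by lra. assert (Hb' : (b - d) ^ 2 = 0) by lra.
    simpl in Ha', Hb'. rewrite Rmult_1_r in Ha', Hb'. apply Rmult_integral in Ha'. apply Rmult_integral in Hb'.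
    f_equal; [destruct Ha'|destruct Hb']; lra.
  - intro H; inversion H; subst.
    match goal with |- sqrt ?e = 0 => replace e with 0 by ring end; exact sqrt_0.
Qed.

Lemma Cdist_sym : forall x y, Cdist x y = Cdist y x.
Proof. intros [a b] [c d]; unfold Cdist; simpl; f_equal; ring. Qed.

Lemma Cdist_tri : forall x y z, Cdist x z <= Cdist x y + Cdist y z.
Proof.
  intros [a b] [c d] [e f]; unfold Cdist; simpl.
  replace (a - e) with ((a - c) + (c - e)) by ring.
  replace (b - f) with ((b - d) + (d - f)) by ring.
  apply euclid_tri.
Qed.

Definition Cmetric : MetricSpace :=
  {| mcarrier := Cplx; mdist := Cdist; mdist_nonneg := Cdist_nonneg;
     mdist_eq0 := Cdist_eq0; mdist_sym := Cdist_sym; mdist_tri := Cdist_tri |}.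

(* The translates of an almost periodic sequence are totally bounded, so for
   every d > 0 finitely many shifts c_1, ..., c_N approximate every translate
   within d in the sup norm. Given r, take a repetition time q of the other
   sequence for the tolerance eps/(N+1) and a horizon of about (r+1)N periods.
   Of the N+1 translates by 0, q, ..., Nq two, by j1 q and j2 q, are close to
   the same c_i, so p = (j2 - j1) q is a 2d-almost period of a on all of Z.
   Since p is a multiple of q of size at most Nq, chaining at most N steps of
   length q shows that p is also a repetition time of the other sequence for
   the tolerance eps. *)

From Stdlib Require Import Reals ZArith List.
From Stdlib Require Import Lra Lia Classical ClassicalEpsilon.
Import ListNotations.
Open Scope R_scope.

Lemma mdist_refl (X : MetricSpace) (x : X) : mdist X x x = 0.
Proof. now apply mdist_eq0. Qed.

Lemma mdist_iter_shift_le (X : MetricSpace) (v : nat -> X) (q bound : nat) (e : R) :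
  (forall n, (n <= bound)%nat -> mdist X (v n) (v (n + q)%nat) < e) ->
  forall j n, (n + j * q <= bound)%nat ->
    mdist X (v n) (v (n + j * q)%nat) <= INR j * e.
Proof.
  intros Hq j; induction j as [|j IHj]; intros n Hn.
  - rewrite Nat.mul_0_l, Nat.add_0_r, mdist_refl; simpl; lra.
  - replace (n + S j * q)%nat with (n + j * q + q)%nat by lia.
    assert (Hstep := Hq (n + j * q)%nat ltac:(lia)).
    assert (Hprev := IHj n ltac:(lia)).
    assert (Htri := mdist_tri X (v n) (v (n + j * q)%nat) (v (n + j * q + q)%nat)).
    rewrite S_INR; lra.
Qed.

Lemma pigeonhole_list {A : Type} (L : list A) (f : nat -> A) :
  (forall j, (j <= length L)%nat -> In (f j) L) ->
  exists j1 j2, (j1 < j2 <= length L)%nat /\ f j1 = f j2.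
Proof.
  intros Hf; apply NNPP; intros Hinj.
  set (l := map f (seq 0 (S (length L)))).
  assert (Hlen : length l = S (length L)) by (unfold l; now rewrite length_map, length_seq).
  assert (Hnth : forall i, (i < length l)%nat -> nth i l (f 0%nat) = f i).
  { intros i Hi; unfold l; rewrite map_nth, seq_nth; [reflexivity | lia]. }
  assert (Hnodup : NoDup l).
  { apply (NoDup_nth l (f 0%nat)); intros i j Hi Hj Heq.
    rewrite !Hnth in Heq by assumption.
    destruct (Nat.lt_total i j) as [Hij | [Hij | Hij]]; [| exact Hij |].
    - exfalso; apply Hinj; exists i, j; split; [lia | exact Heq].
    - exfalso; apply Hinj; exists j, i; split; [lia | now symmetry]. }
  assert (Hincl : incl l L).
  { intros y Hy; unfold l in Hy; apply in_map_iff in Hy as [j [<- Hj]].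
    apply in_seq in Hj; apply Hf; lia. }
  assert (Hle := NoDup_incl_length Hnodup Hincl); lia.
Qed.

Section GreedySequence.

Variables (T : Type) (far : T -> T -> Prop).
Hypothesis far_from_list : forall l : list T, exists x, forall y, In y l -> far x y.

Let pick (l : list T) : T := proj1_sig (constructive_indefinite_description _ (far_from_list l)).

Let pick_far (l : list T) : forall y, In y l -> far (pick l) y.
Proof. exact (proj2_sig (constructive_indefinite_description _ (far_from_list l))). Qed.

Fixpoint greedy_prefix (n : nat) : list T :=
  match n with
  | O => []
  | S n => greedy_prefix n ++ [pick (greedy_prefix n)]
  end.

Lemma greedy_prefix_map (n : nat) :
  greedy_prefix n = map (fun i => pick (greedy_prefix i)) (seq 0 n).
Proof.
  induction n as [|n IHn]; [reflexivity|].
  rewrite seq_S, map_app; simpl; now rewrite <- IHn.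
Qed.

Lemma exists_far_sequence : exists s : nat -> T, forall n i, (i < n)%nat -> far (s n) (s i).
Proof.
  exists (fun n => pick (greedy_prefix n)); intros n i Hi.
  apply pick_far; rewrite (greedy_prefix_map n).
  apply (in_map (fun i => pick (greedy_prefix i))), in_seq; lia.
Qed.

End GreedySequence.

Definition translates_close (a : Z -> Cplx) (d : R) (m c : Z) : Prop :=
  forall k : Z, Cdist (a (k + m)%Z) (a (k + c)%Z) <= d.

Lemma almost_periodic_not_far_sequence (a : Z -> Cplx) (d : R) :
  almost_periodic a -> 0 < d ->
  ~ exists s : nat -> Z, forall n i, (i < n)%nat -> ~ translates_close a d (s n) (s i).
Proof.
  intros [_ Hcompact] Hd [s Hs].
  destruct (Hcompact s) as [phi [Hphi [g [_ Hconv]]]].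
  destruct (Hconv (d / 2)) as [K HK]; [lra|].
  destruct (HK K (le_n K)) as [e1 [He1 H1]].
  destruct (HK (S K) (le_S _ _ (le_n K))) as [e2 [He2 H2]].
  apply (Hs (phi (S K)) (phi K) (Hphi K)); intros k.
  specialize (H1 k); specialize (H2 k); simpl in H1, H2.
  assert (Htri := Cdist_tri (a (k + s (phi (S K)))%Z) (g k) (a (k + s (phi K)))%Z).
  rewrite (Cdist_sym (g k)) in Htri; lra.
Qed.

Lemma almost_periodic_finite_net (a : Z -> Cplx) (d : R) :
  almost_periodic a -> 0 < d ->
  exists L : list Z, forall m, exists c, In c L /\ translates_close a d m c.
Proof.
  intros Hap Hd; apply NNPP; intros Hnonet.
  apply (almost_periodic_not_far_sequence a d Hap Hd).
  apply (exists_far_sequence Z (fun m c => ~ translates_close a d m c)).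
  intros L; apply NNPP; intros Hnear.
  apply Hnonet; exists L; intros m; apply NNPP; intros Hnot.
  apply Hnear; exists m; intros c Hc Hclose.
  apply Hnot; exists c; split; assumption.
Qed.

Lemma translates_close_period (a : Z -> Cplx) (d : R) (m1 m2 c : Z) :
  translates_close a d m1 c -> translates_close a d m2 c ->
  forall z, Cdist (a z) (a (z + (m2 - m1))%Z) <= 2 * d.
Proof.
  intros H1 H2 z.
  specialize (H1 (z - m1)%Z); specialize (H2 (z - m1)%Z).
  replace (z - m1 + m1)%Z with z in H1 by ring.
  replace (z - m1 + m2)%Z with (z + (m2 - m1))%Z in H2 by ring.
  assert (Htri := Cdist_tri (a z) (a (z - m1 + c)%Z) (a (z + (m2 - m1))%Z)).
  rewrite (Cdist_sym (a (z - m1 + c)%Z)) in Htri; lra.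
Qed.

Lemma almost_periodic_joint_repetition (a : Z -> Cplx) (Y : MetricSpace) (v : nat -> Y)
  (eps : R) (r : nat) :
  almost_periodic a -> repetition_property v -> 0 < eps ->
  exists p, (1 <= p)%nat /\ forall n, (n <= r * p)%nat ->
    Cdist (a (Z.of_nat n)) (a (Z.of_nat (n + p))) < eps /\
    mdist Y (v n) (v (n + p)%nat) < eps.
Proof.
  intros Hap Hv Heps.
  destruct (almost_periodic_finite_net a (eps / 3) Hap ltac:(lra)) as [L HL].
  set (N := length L).
  assert (HN := pos_INR N).
  set (e := eps / (INR N + 1)).
  assert (He : 0 < e) by (unfold e; apply Rdiv_lt_0_compat; lra).
  destruct (Hv e He ((r + 1) * N + 1)%nat ltac:(lia)) as [q [Hq Hvq]].
  destruct (choice (fun j c => In c L /\ translates_close a (eps / 3) (Z.of_nat (j * q)) c)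
              (fun j => HL (Z.of_nat (j * q)))) as [f Hf].
  destruct (pigeonhole_list L f (fun j _ => proj1 (Hf j))) as [j1 [j2 [Hj Hf12]]].
  exists ((j2 - j1) * q)%nat; split; [nia|]; intros n Hn; split.
  - assert (Hclose2 := proj2 (Hf j2)); rewrite <- Hf12 in Hclose2.
    assert (Hper := translates_close_period a (eps / 3) _ _ _
                      (proj2 (Hf j1)) Hclose2 (Z.of_nat n)).
    replace (Z.of_nat n + (Z.of_nat (j2 * q) - Z.of_nat (j1 * q)))%Z
      with (Z.of_nat (n + (j2 - j1) * q)) in Hper by lia.
    lra.
  - assert (Hchain := mdist_iter_shift_le Y v q _ e Hvq (j2 - j1) n ltac:(nia)).
    assert (Hj21 : INR (j2 - j1) * e <= INR N * e)
      by (apply Rmult_le_compat_r; [lra | apply le_INR; lia]).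
    assert (HNe : INR N * e = eps - e) by (unfold e; field; lra).
    lra.
Qed.

Theorem theoremA1 :
  forall a : Z -> Cplx, almost_periodic a ->
    universal_joint_repetition_property (X := Cmetric)
      (fun n : nat => a (Z.of_nat n)).
Proof.
  intros a Hap Y v Hv.
  assert (Hjoint := fun eps r Heps => almost_periodic_joint_repetition a Y v eps r Hap Hv Heps).
  split; [| split; [exact Hv |]].
  - intros eps Heps r _; destruct (Hjoint eps r Heps) as [p [Hp Hrep]].
    exists p; split; [exact Hp |]; intros n Hn; exact (proj1 (Hrep n Hn)).
  - intros eps Heps r _; destruct (Hjoint eps r Heps) as [p [Hp Hrep]].
    exists p; split; [exact Hp | exact Hrep].
Qed.
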